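(* Let $\{\epsilon_k\}$ be the sequence of penalty-barrier parameters produced by Algorithm LOG-DFL (defined in the context). Then $\lim_{k\to\infty}\epsilon_k=0$.
   Context: Problem data: $f:\mathbb{R}^n\to\mathbb{R}$, $g:\mathbb{R}^n\to\mathbb{R}^m$, $h:\mathbb{R}^n\to\mathbb{R}^q$ continuously differentiable; $l,u\in\mathbb{R}^n$ with $l<u$; $X=\{x: l\le x\le u\}$; $S_<=\{x: g(x)<0\}$; there is $x_0\in X\cap S_<$. Fix $\nu>1$. For $\epsilon>0$, $P(x;\epsilon)=f(x)-\epsilon\sum_{j=1}^m\log(-g_j(x))+\frac1\epsilon\sum_{j=1}^q|h_j(x)|^\nu$ if $x\in S_<$, and $P(x;\epsilon)=+\infty$ otherwise. $e^i$ is the $i$-th unit coordinate vector. Expansion Step$(\hat\alpha,y,p,\gamma)$ with parameter $\delta\in(0,1)$ (using the current parameter $\epsilon_k$): let $b$ be the largest $\beta\ge0$ with $y+\beta p\in X$; set $\alpha\leftarrow\hat\alpha$; repeat: $\check\alpha\leftarrow\min\{b,\alpha/\delta\}$; if $y+\check\alpha p\notin S_<$ return $\alpha$; else if $P(y+\check\alpha p;\epsilon_k)\le P(y;\epsilon_k)-\gamma\check\alpha^2$ set $\alpha\leftarrow\check\alpha$ and return if $\check\alpha=b$, else repeat; otherwise return $\alpha$. Algorithm LOG-DFL (parameters $\epsilon_0>0,\gamma>0,\theta\in(0,1),p>1,\delta\in(0,1)$, $\tilde\alpha_0^i>0$, $d_0^i=e^i$): for $k=0,1,\dots$: Step 1: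 set $y_k^1=x_k$. For $i=1,\dots,n$: (a) choose $\hat\alpha\in[0,\tilde\alpha_k^i]$ with $y_k^i+\hat\alpha d_k^i\in S_<\cap X$; if $\hat\alpha>0$ and $P(y_k^i+\hat\alpha d_k^i;\epsilon_k)\le P(y_k^i;\epsilon_k)-\gamma\hat\alpha^2$, let $\alpha_k^i$ be the output of the Expansion Step$(\hat\alpha,y_k^i,d_k^i,\gamma)$ and set $\tilde\alpha_{k+1}^i=\alpha_k^i$, $d_{k+1}^i=d_k^i$; (b) otherwise do the same with $-d_k^i$ in place of $d_k^i$, and on success set $\tilde\alpha_{k+1}^i=\alpha_k^i$, $d_{k+1}^i=-d_k^i$; (c) if neither succeeds set $\alpha_k^i=0$, $d_{k+1}^i=d_k^i$, $\tilde\alpha_{k+1}^i=\theta\tilde\alpha_k^i$. Then $y_k^{i+1}=y_k^i+\alpha_k^i d_{k+1}^i$. Step 2: let $(g_{\min})_k=\min_{i=1,\dots,n+1,\ \ell=1,\dots,m}|g_\ell(y_k^i)|$; if $\max_{i=1,\dots,n}\max\{\tilde\alpha_k^i,\alpha_k^i\}\le\min\{\epsilon_k^p,(g_{\min})_k^2\}$ set $\epsilon_{k+1}=\theta\epsilon_k$, else $\epsilon_{k+1}=\epsilon_k$. Step 3: choose any $x_{k+1}\in S_<\cap X$ with $P(x_{k+1};\epsilon_k)\le P(y_k^{n+1};\epsilon_k)$. *)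

From HB Require Import structures.
From mathcomp Require Import all_boot all_order all_algebra.
From mathcomp Require Import all_classical all_reals all_analysis.
Set Implicit Arguments. Unset Strict Implicit. Unset Printing Implicit Defensive.
Import Order.TTheory GRing.Theory Num.Theory.
Import numFieldNormedType.Exports.
Local Open Scope classical_set_scope.
Local Open Scope ring_scope.

(* Continuously differentiable: differentiable everywhere, and every
   directional derivative x |-> 'd F x v is continuous in x (in finite
   dimension this is continuity of x |-> 'd F x). *)
Definition C1 (R : realType) (V W : normedModType R) (F : V -> W) : Prop :=
  (forall x, differentiable F x) /\ (forall v : V, continuous (fun x => 'D_v F x)).

Definition inX (R : realType) (n : nat) (l u : 'rV[R]_n) (x : 'rV[R]_n) : Prop :=
  forall i : 'I_n, l ord0 i <= x ord0 i <= u ord0 i.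

Definition inS (R : realType) (n m : nat) (g : 'rV[R]_n -> 'rV[R]_m)
  (x : 'rV[R]_n) : bool := [forall j : 'I_m, g x ord0 j < 0].

Definition Pfun (R : realType) (n m q : nat) (f : 'rV[R]_n -> R)
  (g : 'rV[R]_n -> 'rV[R]_m) (h : 'rV[R]_n -> 'rV[R]_q) (nu eps : R)
  (x : 'rV[R]_n) : \bar R :=
  if inS g x then
    (f x - eps * (\sum_(j < m) ln (- g x ord0 j))
         + eps^-1 * (\sum_(j < q) (`|h x ord0 j| `^ nu)))%:E
  else +oo%E.

Definition is_max_step (R : realType) (n : nat) (l u y p : 'rV[R]_n) (b : R) : Prop :=
  [/\ 0 <= b, inX l u (y + b *: p) &
      forall beta, 0 <= beta -> inX l u (y + beta *: p) -> beta <= b].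

Definition suff_decr (R : realType) (n : nat) (Pk : 'rV[R]_n -> \bar R)
    (gamma : R) (y z : 'rV[R]_n) (a : R) : Prop :=
  (Pk z <= Pk y - (gamma * a ^+ 2)%:E)%E.

(* The repeat-loop of the Expansion Step: [expand_loop ... a r] means that
   the loop entered with current value alpha = a returns r. Pk = P(.;eps_k),
   S = membership in S_<, b = maximal feasible step. *)
Inductive expand_loop (R : realType) (n : nat) (Pk : 'rV[R]_n -> \bar R)
    (S : 'rV[R]_n -> bool) (delta gamma b : R) (y p : 'rV[R]_n) : R -> R -> Prop :=
| expand_outside a :
    ~~ S (y + Num.min b (a / delta) *: p) ->
    expand_loop Pk S delta gamma b y p a a
| expand_nodecrease a :
    S (y + Num.min b (a / delta) *: p) ->
    ~ suff_decr Pk gamma y (y + Num.min b (a / delta) *: p) (Num.min b (a / delta)) ->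
    expand_loop Pk S delta gamma b y p a a
| expand_reach_b a :
    Num.min b (a / delta) = b ->
    S (y + Num.min b (a / delta) *: p) ->
    suff_decr Pk gamma y (y + Num.min b (a / delta) *: p) (Num.min b (a / delta)) ->
    expand_loop Pk S delta gamma b y p a b
| expand_continue a r :
    Num.min b (a / delta) <> b ->
    S (y + Num.min b (a / delta) *: p) ->
    suff_decr Pk gamma y (y + Num.min b (a / delta) *: p) (Num.min b (a / delta)) ->
    expand_loop Pk S delta gamma b y p (Num.min b (a / delta)) r ->
    expand_loop Pk S delta gamma b y p a r.

Definition expansion_step (R : realType) (n : nat) (l u : 'rV[R]_n)
    (Pk : 'rV[R]_n -> \bar R) (S : 'rV[R]_n -> bool) (delta gamma : R)
    (ahat : R) (y p : 'rV[R]_n) (alpha : R) : Prop :=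
  exists b, is_max_step l u y p b /\ expand_loop Pk S delta gamma b y p ahat alpha.

Definition step_success (R : realType) (n : nat) (Pk : 'rV[R]_n -> \bar R)
    (gamma ahat : R) (y dir : 'rV[R]_n) : Prop :=
  0 < ahat /\ suff_decr Pk gamma y (y + ahat *: dir) ahat.

(* Data of the run:
   x k = x_k, eps k = eps_k, ta k i = tilde alpha_k^i, al k i = alpha_k^i,
   d k i = d_k^i, y k i = y_k^{i+1} (i = 0..n, so y k 0 = x_k and y k n = y_k^{n+1}),
   ahp k i / ahm k i = the hat-alpha chosen in Step 1(a) / Step 1(b). *)
Definition logdfl_run (R : realType) (n m q : nat) (f : 'rV[R]_n -> R)
    (g : 'rV[R]_n -> 'rV[R]_m) (h : 'rV[R]_n -> 'rV[R]_q) (l u : 'rV[R]_n)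
    (nu eps0 gamma theta pe delta : R) (ta0 : 'I_n -> R) (x0 : 'rV[R]_n)
    (x : nat -> 'rV[R]_n) (eps : nat -> R) (ta al : nat -> 'I_n -> R)
    (d : nat -> 'I_n -> 'rV[R]_n) (y : nat -> nat -> 'rV[R]_n)
    (ahp ahm : nat -> 'I_n -> R) : Prop :=
  let P := Pfun f g h nu in
  let S := inS g in
  [/\
      [/\ x 0%N = x0, eps 0%N = eps0,
         (forall i, ta 0%N i = ta0 i) &
         (forall i : 'I_n, d 0%N i = delta_mx ord0 i)],
      (forall k, y k 0%N = x k),
      (forall k (i : 'I_n),
        let Y := y k i in let D := d k i in let T := ta k i in
        [/\ [/\ 0 <= ahp k i <= T, inX l u (Y + ahp k i *: D) & S (Y + ahp k i *: D)],
            (step_success (P (eps k)) gamma (ahp k i) Y D ->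
               [/\ expansion_step l u (P (eps k)) S delta gamma (ahp k i) Y D (al k i),
                   ta k.+1 i = al k i & d k.+1 i = D]),
            (~ step_success (P (eps k)) gamma (ahp k i) Y D ->
               [/\ [/\ 0 <= ahm k i <= T, inX l u (Y + ahm k i *: (- D)) &
                   S (Y + ahm k i *: (- D))],
                   (step_success (P (eps k)) gamma (ahm k i) Y (- D) ->
                      [/\ expansion_step l u (P (eps k)) S delta gamma (ahm k i) Y (- D)
                            (al k i),
                          ta k.+1 i = al k i & d k.+1 i = - D]) &
                   (~ step_success (P (eps k)) gamma (ahm k i) Y (- D) ->
                      [/\ al k i = 0, d k.+1 i = D & ta k.+1 i = theta * T])]) &
            y k i.+1 = Y + al k i *: d k.+1 i]),
      (forall k,
        let cond :=
          (forall i : 'I_n, Num.max (ta k i) (al k i) <= eps k `^ pe) /\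
          (forall (i : 'I_n) (i' : 'I_n.+1) (j : 'I_m),
             Num.max (ta k i) (al k i) <= `|g (y k i') ord0 j| ^+ 2) in
        (cond -> eps k.+1 = theta * eps k) /\ (~ cond -> eps k.+1 = eps k)) &
      (forall k, [/\ inX l u (x k.+1), S (x k.+1) &
                    (P (eps k) (x k.+1) <= P (eps k) (y k n))%E])].

(* Step 2 either keeps eps_k or multiplies it by theta < 1, so eps is positive
   and nonincreasing; if the reduction test of Step 2 succeeds infinitely often,
   eps_k tends to 0 (run_eps_cvg0).  Otherwise eps_k is frozen at E > 0 from some
   K on, which is impossible (stalled_reduction):
   - each iteration decreases the finite merit value Pval(.; E) by at least
     gamma (alpha_k^i)^2, and Pval(.; E) is bounded below on the compact box X,
     so the steps alpha_k^i tend to 0;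
   - the trial steps tilde alpha_k^i are reset to alpha_k^i or contracted by
     theta, so they eventually become small as well;
   - the inner iterates stay in a sublevel set of Pval(.; E), on which the
     barrier keeps |g_j| above a positive constant. *)

From Pilot Require Import Defs.
From HB Require Import structures.
From mathcomp Require Import all_boot all_order all_algebra.
From mathcomp Require Import all_classical all_reals all_analysis.
From mathcomp Require Import lra zify.
Set Implicit Arguments. Unset Strict Implicit. Unset Printing Implicit Defensive.
Import Order.TTheory GRing.Theory Num.Theory.
Import numFieldNormedType.Exports.
Local Open Scope classical_set_scope.
Local Open Scope ring_scope.

Lemma geometric_eventually_lt (R : realType) (theta c e : R) :
  0 <= theta -> theta < 1 -> 0 <= c -> 0 < e ->
  exists T, forall t, (T <= t)%N -> theta ^+ t * c < e.
Proof.
move=> th0 th1 c0 e0.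
have c1 : 0 < c + 1 by rewrite ltr_wpDl.
have : `|theta| < 1 by rewrite ger0_norm.
move/cvg_expr/cvgr0Pnorm_lt => /(_ (e / (c + 1)) (divr_gt0 e0 c1)) [T _ HT].
exists T => t /HT /=; rewrite ger0_norm ?exprn_ge0 // ltr_pdivlMr // => lt.
by apply: le_lt_trans lt; rewrite ler_wpM2l ?exprn_ge0 // lerDl.
Qed.

Lemma nonincreasing_small_decrements (R : realType) (w : R ^nat) (L e : R) :
  nonincreasing_seq w -> (forall j, L <= w j) -> 0 < e ->
  exists N, forall j, (N <= j)%N -> w j - w j.+1 <= e.
Proof.
move=> w_dec w_lb e0.
have hinf : has_inf (range w).
  by split; [exists (w 0%N), 0%N | exists L => _ [j _ <-]].
have [_ [N _ <-] HN] := inf_adherent e0 hinf.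
exists N => j Nj.
have : inf (range w) <= w j.+1 by apply: ge_inf; [exact: hinf.2 | exists j.+1].
have := w_dec _ _ Nj; lra.
Qed.

Lemma reset_or_contract_eventually_le (R : realType) (a b : R ^nat) (theta tau : R)
    (N : nat) :
  0 <= theta -> theta < 1 -> 0 < tau ->
  (forall k, a k.+1 = b k \/ a k.+1 = theta * a k) ->
  (forall k, (N <= k)%N -> b k <= tau) ->
  exists T, forall k, (T <= k)%N -> a k <= tau.
Proof.
move=> th0 th1 tau0 step b_le.
have bound t : a (N + t)%N <= tau \/ a (N + t)%N <= theta ^+ t * `|a N|.
  elim: t => [|t IH]; first by right; rewrite addn0 expr0 mul1r ler_norm.
  rewrite addnS; case: (step (N + t)%N) => ->.
    by left; apply: b_le; rewrite leq_addr.
  case: IH => IH; first by left; nra.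
  by right; rewrite exprS -mulrA ler_wpM2l.
have [T HT] := geometric_eventually_lt (c := `|a N|) th0 th1 (normr_ge0 _) tau0.
exists (N + T)%N => k NTk; have -> : k = (N + (k - N))%N by lia.
case: (bound (k - N)%N) => // le; apply: le_trans le (ltW (HT _ _)); lia.
Qed.

Lemma eventually_forall_ord (n : nat) (P : 'I_n -> nat -> Prop) :
  (forall i, exists N, forall k, (N <= k)%N -> P i k) ->
  exists N, forall i k, (N <= k)%N -> P i k.
Proof.
move=> /choice [F HF]; exists (\max_i F i)%N => i k Nk; apply: HF.
by apply: leq_trans Nk; apply: leq_bigmax.
Qed.

Lemma inX_segment (R : realType) (n : nat) (l u Y p : 'rV[R]_n) (b t : R) :
  inX l u Y -> inX l u (Y + b *: p) -> 0 <= t <= b -> inX l u (Y + t *: p).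
Proof.
move=> XY Xb /andP[t0 tb] i; move: (XY i) (Xb i); rewrite !mxE.
move=> /andP[lY Yu] /andP[lb bu].
have [p0|p0] := lerP 0 (p ord0 i).
- have : 0 <= t * p ord0 i by rewrite mulr_ge0.
  have : t * p ord0 i <= b * p ord0 i by rewrite ler_wpM2r.
  move=> *; apply/andP; split; lra.
- have : t * p ord0 i <= 0 by rewrite mulr_ge0_le0 // ltW.
  have : b * p ord0 i <= t * p ord0 i by rewrite ler_wnM2r // ltW.
  move=> *; apply/andP; split; lra.
Qed.

Lemma compact_inX (R : realType) (n : nat) (l u : 'rV[R]_n) :
  compact [set x | inX l u x].
Proof.
have -> : [set x | inX l u x] =
    [set v : 'rV[R]_n | forall i, `[l ord0 i, u ord0 i]%classic (v ord0 i)].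
  by apply/seteqP; split => v /= Xv i; move: (Xv i); rewrite /= in_itv.
apply: (@rV_compact _ _ (fun i => `[l ord0 i, u ord0 i]%classic)) => i.
exact: segment_compact.
Qed.

Lemma bounded_on_inX (R : realType) (n : nat) (V : normedModType R)
    (F : 'rV[R]_n -> V) (l u : 'rV[R]_n) :
  continuous F -> exists M : R, forall x, inX l u x -> `|F x| <= M.
Proof.
move=> F_cont.
have : compact (F @` [set x | inX l u x]).
  by apply: continuous_compact; [exact: continuous_subspaceT | exact: compact_inX].
move/compact_bounded => [M [_ HM]].
by exists (M + 1) => x Xx; apply: (HM (M + 1)); [rewrite ltrDl | exists x].
Qed.

Lemma row_entry_le_norm (R : realType) (m : nat) (v : 'rV[R]_m) (j : 'I_m) :
  `|v ord0 j| <= `|v|.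
Proof.
have -> : `|v| = mx_norm v by [].
rewrite mx_normrE.
by apply/bigmax_geP; right => /=; exists (ord0, j).
Qed.

(* The Expansion Step only accepts trial steps that pass the sufficient decrease
   test and lie between 0 and the maximal step b, so it returns a step with
   sufficient decrease inside X whenever it starts from one. *)
Lemma expand_loop_sound (R : realType) (n : nat) (l u : 'rV[R]_n)
    (Pk : 'rV[R]_n -> \bar R) (S : 'rV[R]_n -> bool) (delta gamma b : R)
    (Y p : 'rV[R]_n) (a r : R) :
  0 < delta -> 0 <= b -> inX l u Y -> inX l u (Y + b *: p) ->
  expand_loop Pk S delta gamma b Y p a r ->
  0 <= a -> suff_decr Pk gamma Y (Y + a *: p) a -> inX l u (Y + a *: p) ->
  suff_decr Pk gamma Y (Y + r *: p) r /\ inX l u (Y + r *: p).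
Proof.
move=> delta0 b0 XY Xb; elim => {a r} [a _ _ ? ?|a _ _ _ ? ?|a reach _ dec _ _ _|
  a r _ _ dec _ IH a0 _ _]; try by [].
- by rewrite -reach; split => //; rewrite reach.
have trial0 : 0 <= Num.min b (a / delta) by rewrite le_min b0 divr_ge0 // ltW.
apply: IH => //; apply: (inX_segment XY Xb).
by rewrite trial0 ge_min lexx.
Qed.

Lemma expansion_step_sound (R : realType) (n : nat) (l u : 'rV[R]_n)
    (Pk : 'rV[R]_n -> \bar R) (S : 'rV[R]_n -> bool) (delta gamma ahat : R)
    (Y p : 'rV[R]_n) (alpha : R) :
  0 < delta -> inX l u Y -> expansion_step l u Pk S delta gamma ahat Y p alpha ->
  step_success Pk gamma ahat Y p -> inX l u (Y + ahat *: p) ->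
  suff_decr Pk gamma Y (Y + alpha *: p) alpha /\ inX l u (Y + alpha *: p).
Proof.
move=> delta0 XY [b [[b0 Xb _] loop]] [ahat0 dec] Xahat.
exact: (expand_loop_sound delta0 b0 XY Xb loop (ltW ahat0) dec Xahat).
Qed.

Definition Pval (R : realType) (n m q : nat) (f : 'rV[R]_n -> R)
    (g : 'rV[R]_n -> 'rV[R]_m) (h : 'rV[R]_n -> 'rV[R]_q) (nu E : R)
    (z : 'rV[R]_n) : R :=
  f z - E * (\sum_(j < m) ln (- g z ord0 j))
      + E^-1 * (\sum_(j < q) (`|h z ord0 j| `^ nu)).

Definition feasible (R : realType) (n m : nat) (l u : 'rV[R]_n)
    (g : 'rV[R]_n -> 'rV[R]_m) (z : 'rV[R]_n) : Prop :=
  inX l u z /\ inS g z.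

Section PenaltyValue.
Variables (R : realType) (n m q : nat) (f : 'rV[R]_n -> R)
  (g : 'rV[R]_n -> 'rV[R]_m) (h : 'rV[R]_n -> 'rV[R]_q) (nu : R).

(* On S_<, P(.; E) is the finite value Pval(.; E).  (Pfun is qualified because
   MathComp-Analysis exports another constant of that name.) *)
Lemma Pfun_inS (E : R) (z : 'rV[R]_n) :
  inS g z -> Defs.Pfun f g h nu E z = (Pval f g h nu E z)%:E.
Proof. by rewrite /Defs.Pfun => ->. Qed.

(* Sufficient decrease from a point of S_< stays in S_< (P is +oo outside)
   and is an inequality between finite values. *)
Lemma suff_decr_inS (E gamma a : R) (Y z : 'rV[R]_n) :
  inS g Y -> suff_decr (Defs.Pfun f g h nu E) gamma Y z a ->
  inS g z /\ Pval f g h nu E z <= Pval f g h nu E Y - gamma * a ^+ 2.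
Proof.
move=> SY; rewrite /suff_decr (Pfun_inS _ SY).
case Sz: (inS g z); last by rewrite /Defs.Pfun Sz.
by rewrite (Pfun_inS _ Sz) -EFinB lee_fin.
Qed.

Variables (E Mf G : R) (z : 'rV[R]_n).
Hypotheses (E_gt0 : 0 < E) (f_le : `|f z| <= Mf)
  (g_bounds : forall j, 0 < - g z ord0 j <= G).

Lemma barrier_partial_sum_le (P : pred 'I_m) :
  \sum_(j < m | P j) ln (- g z ord0 j) <= m%:R * `|ln G|.
Proof.
have ln_le j : ln (- g z ord0 j) <= `|ln G|.
  have /andP[gj0 gjG] := g_bounds j.
  by apply: le_trans (ler_norm _); rewrite ler_ln ?posrE // (lt_le_trans gj0).
apply: (@le_trans _ _ (\sum_(j < m | P j) `|ln G|)); first exact: ler_sum.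
have -> : m%:R * `|ln G| = \sum_(j < m) `|ln G| by rewrite sumr_const card_ord mulr_natl.
by rewrite [leRHS](bigID P) /= lerDl sumr_ge0.
Qed.

Lemma penalty_term_ge0 : 0 <= E^-1 * (\sum_(j < q) (`|h z ord0 j| `^ nu)).
Proof.
apply: mulr_ge0; first by rewrite invr_ge0 ltW.
by apply: sumr_ge0 => j _; exact: powR_ge0.
Qed.

Lemma Pval_lower_bound : - Mf - E * (m%:R * `|ln G|) <= Pval f g h nu E z.
Proof.
have : - Mf <= f z by move: f_le; rewrite ler_norml => /andP[].
have : E * (\sum_(j < m) ln (- g z ord0 j)) <= E * (m%:R * `|ln G|).
  by rewrite ler_pM2l // (barrier_partial_sum_le predT).
have := penalty_term_ge0; rewrite /Pval; lra.
Qed.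

(* The barrier effect: on the sublevel set {Pval(.; E) <= C} each -g_j stays
   above an explicit positive constant. *)
Lemma Pval_barrier (C : R) (j : 'I_m) :
  Pval f g h nu E z <= C ->
  expR ((- Mf - C - E * (m%:R * `|ln G|)) / E) <= - g z ord0 j.
Proof.
move=> PC; have /andP[gj0 _] := g_bounds j.
have : - Mf <= f z by move: f_le; rewrite ler_norml => /andP[].
have : E * (\sum_(l < m | l != j) ln (- g z ord0 l)) <= E * (m%:R * `|ln G|).
  by rewrite ler_pM2l // barrier_partial_sum_le.
move: PC (penalty_term_ge0); rewrite /Pval (bigD1 j) //= mulrDr => *.
rewrite -[leRHS]lnK ?posrE // ler_expR ler_pdivrMr // mulrC; lra.
Qed.

End PenaltyValue.

(* Continuity of f and g on the compact box provides the bounds used above,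
   uniformly on the feasible points. *)
Lemma feasible_bounds (R : realType) (n m : nat) (l u : 'rV[R]_n)
    (f : 'rV[R]_n -> R) (g : 'rV[R]_n -> 'rV[R]_m) :
  continuous f -> continuous g ->
  exists Mf G : R, forall z, feasible l u g z ->
    `|f z| <= Mf /\ forall j, 0 < - g z ord0 j <= G.
Proof.
move=> f_cont g_cont.
have [Mf f_le] := bounded_on_inX l u f_cont.
have [Mg g_le] := bounded_on_inX l u g_cont.
exists Mf, (`|Mg| + 1) => z [Xz Sz]; split; first exact: f_le.
move=> j; move/forallP: Sz => /(_ j) gj_lt0; rewrite oppr_gt0 gj_lt0 /=.
have := row_entry_le_norm (g z) j; have := g_le z Xz; have := ler_norm Mg.
rewrite (ltr0_norm gj_lt0); lra.
Qed.

Section LogDflRun.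
Variables (R : realType) (n m q : nat) (f : 'rV[R]_n -> R)
  (g : 'rV[R]_n -> 'rV[R]_m) (h : 'rV[R]_n -> 'rV[R]_q) (l u x0 : 'rV[R]_n)
  (nu eps0 gamma theta pe delta : R) (ta0 : 'I_n -> R)
  (x : nat -> 'rV[R]_n) (eps : nat -> R) (ta al : nat -> 'I_n -> R)
  (d : nat -> 'I_n -> 'rV[R]_n) (y : nat -> nat -> 'rV[R]_n)
  (ahp ahm : nat -> 'I_n -> R).
Hypothesis run :
  logdfl_run f g h l u nu eps0 gamma theta pe delta ta0 x0 x eps ta al d y ahp ahm.
Hypotheses (delta_gt0 : 0 < delta) (gamma_gt0 : 0 < gamma)
  (theta_gt0 : 0 < theta) (theta_lt1 : theta < 1) (eps0_gt0 : 0 < eps0)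
  (x0_feasible : feasible l u g x0).
Hypotheses (f_cont : continuous f) (g_cont : continuous g).

Local Notation Q E := (Pval f g h nu E).

Definition reduction_test (k : nat) : Prop :=
  (forall i : 'I_n, Num.max (ta k i) (al k i) <= eps k `^ pe) /\
  (forall (i : 'I_n) (i' : 'I_n.+1) (j : 'I_m),
     Num.max (ta k i) (al k i) <= `|g (y k i') ord0 j| ^+ 2).

Lemma run_coordinate_step (k : nat) (i : 'I_n) :
  feasible l u g (y k i) ->
  feasible l u g (y k i.+1) /\
  Q (eps k) (y k i.+1) + gamma * al k i ^+ 2 <= Q (eps k) (y k i).
Proof.
case: run => _ _ stepH _ _ [XY SY].
have accepted (p : 'rV[R]_n) (ahat : R) :
    step_success (Defs.Pfun f g h nu (eps k)) gamma ahat (y k i) p ->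
    inX l u (y k i + ahat *: p) ->
    expansion_step l u (Defs.Pfun f g h nu (eps k)) (inS g) delta gamma ahat
      (y k i) p (al k i) ->
    feasible l u g (y k i + al k i *: p) /\
    Q (eps k) (y k i + al k i *: p) + gamma * al k i ^+ 2 <= Q (eps k) (y k i).
  move=> success Xahat exp.
  have [dec Xr] := expansion_step_sound delta_gt0 XY exp success Xahat.
  have [Sr Qr] := suff_decr_inS SY dec.
  split; [by split | lra].
have [[_ Xahp _] success_p fail_p ->] := stepH k i.
have [sp|nsp] := pselect (step_success (Defs.Pfun f g h nu (eps k)) gamma (ahp k i)
  (y k i) (d k i)).
  by have [exp _ ->] := success_p sp; exact: accepted sp Xahp exp.
have [[_ Xahm _] success_m fail_m] := fail_p nsp.
have [sm|nsm] := pselect (step_success (Defs.Pfun f g h nu (eps k)) gamma (ahm k i)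
  (y k i) (- d k i)).
  by have [exp _ ->] := success_m sm; exact: accepted sm Xahm exp.
have [-> _ _] := fail_m nsm.
by rewrite scale0r addr0 expr0n /= mulr0 addr0.
Qed.

Lemma run_sweep_feasible (k : nat) :
  feasible l u g (x k) -> forall i, (i <= n)%N -> feasible l u g (y k i).
Proof.
case: run => _ y0E _ _ _ xk; elim => [|i IH] i_le; first by rewrite y0E.
exact: (@run_coordinate_step k (Ordinal i_le) (IH (ltnW i_le))).1.
Qed.

Lemma run_x_feasible (k : nat) : feasible l u g (x k).
Proof.
case: run => [[x0E _ _ _] _ _ _ xstep]; elim: k => [|k xk]; first by rewrite x0E.
by have [Xk Sk _] := xstep k.
Qed.

Lemma run_y_feasible (k i : nat) : (i <= n)%N -> feasible l u g (y k i).
Proof. exact/run_sweep_feasible/run_x_feasible. Qed.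

Lemma run_coordinate_decrease (k : nat) (i : 'I_n) :
  Q (eps k) (y k i.+1) + gamma * al k i ^+ 2 <= Q (eps k) (y k i).
Proof. exact: (@run_coordinate_step k i (run_y_feasible k (ltnW (ltn_ord i)))).2. Qed.

Lemma run_sweep_monotone (k i j : nat) :
  (i <= j)%N -> (j <= n)%N -> Q (eps k) (y k j) <= Q (eps k) (y k i).
Proof.
elim: j => [|j IH] ij jn; first by move: ij; rewrite leqn0 => /eqP ->.
case: (ltngtP i j.+1) ij => // [lt _|-> _]; last by [].
apply: le_trans (IH lt (ltnW jn)).
have := run_coordinate_decrease k (Ordinal jn).
have := mulr_ge0 (ltW gamma_gt0) (sqr_ge0 (al k (Ordinal jn))); rewrite /=; lra.
Qed.

Lemma run_merit_le_start (k i : nat) :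
  (i <= n)%N -> Q (eps k) (y k i) <= Q (eps k) (x k).
Proof.
by case: run => _ y0E _ _ _ i_le; rewrite -y0E; exact: run_sweep_monotone.
Qed.

Lemma run_merit_next_le (k : nat) : Q (eps k) (x k.+1) <= Q (eps k) (y k n).
Proof.
case: run => _ _ _ _ /(_ k) [_ Sx Px]; have [_ Sy] := run_y_feasible k (leqnn n).
by move: Px; rewrite !Pfun_inS // lee_fin.
Qed.

Lemma run_merit_nonincreasing (k : nat) : Q (eps k) (x k.+1) <= Q (eps k) (x k).
Proof. exact: le_trans (run_merit_next_le k) (run_merit_le_start k (leqnn n)). Qed.

Lemma run_merit_drop (k : nat) (i : 'I_n) :
  Q (eps k) (x k.+1) + gamma * al k i ^+ 2 <= Q (eps k) (x k).
Proof.
have := run_merit_next_le k; have := run_sweep_monotone k (ltn_ord i) (leqnn n).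
have := run_coordinate_decrease k i.
have := run_merit_le_start k (ltnW (ltn_ord i)); lra.
Qed.

Lemma run_eps_update (k : nat) :
  (reduction_test k -> eps k.+1 = theta * eps k) /\
  (~ reduction_test k -> eps k.+1 = eps k).
Proof. by case: run => _ _ _ epsH _; exact: epsH. Qed.

Lemma run_eps_gt0 (k : nat) : 0 < eps k.
Proof.
case: run => [[_ eps0E _ _] _ _ _ _]; elim: k => [|k IH]; first by rewrite eps0E.
have [red nored] := run_eps_update k.
by have [/red|/nored] := pselect (reduction_test k) => ->; rewrite ?mulr_gt0.
Qed.

Lemma run_eps_nonincreasing : nonincreasing_seq eps.
Proof.
apply/nonincreasing_seqP => k; have [red nored] := run_eps_update k.
have [/red|/nored] := pselect (reduction_test k) => ->; last by [].
by rewrite ger_pMl ?run_eps_gt0 // ltW.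
Qed.

Lemma run_ta_update (k : nat) (i : 'I_n) :
  ta k.+1 i = al k i \/ ta k.+1 i = theta * ta k i.
Proof.
case: run => _ _ /(_ k i) [_ success_p fail_p _] _ _.
have [/success_p[_ -> _]|/fail_p[_ success_m fail_m]] := pselect (step_success
  (Defs.Pfun f g h nu (eps k)) gamma (ahp k i) (y k i) (d k i)); first by left.
by have [/success_m[_ -> _]|/fail_m[_ _ ->]] := pselect (step_success
  (Defs.Pfun f g h nu (eps k)) gamma (ahm k i) (y k i) (- d k i)); [left | right].
Qed.

Lemma run_eps_cvg0 :
  (forall K, exists k, (K <= k)%N /\ reduction_test k) -> eps @ \oo --> 0.
Proof.
move=> frequent.
have geometric N : exists k, eps k <= theta ^+ N * eps0.
  elim: N => [|N [k le]].
    by case: run => [[_ eps0E _ _] _ _ _ _]; exists 0%N; rewrite eps0E expr0 mul1r.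
  have [k' [kk' red]] := frequent k; exists k'.+1.
  rewrite ((run_eps_update k').1 red) exprS -mulrA ler_pM2l //.
  exact: le_trans (run_eps_nonincreasing kk') le.
apply/cvgr0Pnorm_lt => e e0.
have [T HT] := geometric_eventually_lt (ltW theta_gt0) theta_lt1 (ltW eps0_gt0) e0.
have [k le] := geometric T.
exists k => // j /= kj; rewrite ger0_norm ?ltW ?run_eps_gt0 //.
exact: le_lt_trans (run_eps_nonincreasing kj) (le_lt_trans le (HT T (leqnn T))).
Qed.

Section Stalled.
Variable K : nat.
Hypothesis stall : forall k, (K <= k)%N -> eps k = eps K.

Lemma stalled_merit_nonincreasing : nonincreasing_seq (fun j => Q (eps K) (x (K + j))).
Proof.
apply/nonincreasing_seqP => j /=; rewrite addnS -(stall (leq_addr j K)).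
exact: run_merit_nonincreasing.
Qed.

Lemma stalled_merit_le (k : nat) : (K <= k)%N -> Q (eps K) (x k) <= Q (eps K) (x K).
Proof.
move=> Kk; have := stalled_merit_nonincreasing (leq0n (k - K)).
by rewrite /= addn0 subnKC.
Qed.

Lemma stalled_steps_vanish (e : R) :
  0 < e -> exists N, forall (i : 'I_n) k, (N <= k)%N -> al k i <= e.
Proof.
move=> e_gt0; have [Mf [G bounds]] := feasible_bounds l u f_cont g_cont.
have lower j : - Mf - eps K * (m%:R * `|ln G|) <= Q (eps K) (x (K + j)).
  have [f_le g_bounds] := bounds _ (run_x_feasible (K + j)).
  exact: Pval_lower_bound (run_eps_gt0 K) f_le g_bounds.
have [N small] := nonincreasing_small_decrements stalled_merit_nonincreasing lower
  (mulr_gt0 gamma_gt0 (exprn_gt0 2 e_gt0)).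
exists (K + N)%N => i k NKk; have -> : k = (K + (k - K))%N by lia.
have := run_merit_drop (K + (k - K)) i; rewrite (stall (leq_addr _ _)).
have := small (k - K)%N (ltac:(lia)); rewrite /= addnS => drop_small drop.
have : al (K + (k - K))%N i ^+ 2 <= e ^+ 2 by rewrite -(ler_pM2l gamma_gt0); lra.
by rewrite !expr2 => sq; nra.
Qed.

(* All inner iterates stay in the sublevel set of x_K, so g is bounded away
   from 0 along them. *)
Lemma stalled_barrier_margin :
  exists c, 0 < c /\ forall k (i' : 'I_n.+1) (j : 'I_m),
    (K <= k)%N -> c <= `|g (y k i') ord0 j| ^+ 2.
Proof.
have [Mf [G bounds]] := feasible_bounds l u f_cont g_cont.
pose c := expR ((- Mf - Q (eps K) (x K) - eps K * (m%:R * `|ln G|)) / eps K).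
exists (c ^+ 2); split => [|k i' j Kk]; first by rewrite exprn_gt0 ?expR_gt0.
have i'_le : (i' <= n)%N by rewrite -ltnS.
have [f_le g_bounds] := bounds _ (run_y_feasible k i'_le).
have level : Q (eps K) (y k i') <= Q (eps K) (x K).
  apply: le_trans (stalled_merit_le Kk); rewrite -(stall Kk).
  exact: run_merit_le_start.
have margin := Pval_barrier (run_eps_gt0 K) f_le g_bounds j level.
have /andP[gj_pos _] := g_bounds j.
rewrite ltr0_norm -?oppr_gt0 // !expr2.
by apply: ler_pM => //; exact: ltW (expR_gt0 _).
Qed.

Lemma stalled_reduction : exists k, (K <= k)%N /\ reduction_test k.
Proof.
have [c [c_gt0 margin]] := stalled_barrier_margin.
pose tau := Num.min (eps K `^ pe) c.
have tau_gt0 : 0 < tau by rewrite lt_min powR_gt0 ?run_eps_gt0.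
have [N small_al] := stalled_steps_vanish tau_gt0.
have [T small_ta] : exists T, forall (i : 'I_n) k, (T <= k)%N -> ta k i <= tau.
  apply: eventually_forall_ord => i.
  exact: reset_or_contract_eventually_le (ltW theta_gt0) theta_lt1 tau_gt0
    (run_ta_update ^~ i) (small_al i).
pose k := maxn K (maxn N T); have Kk : (K <= k)%N by lia.
have step_le i : Num.max (ta k i) (al k i) <= tau.
  by rewrite ge_max small_ta ?small_al //; lia.
exists k; split => //; split => [i|i i' j]; apply: le_trans (step_le i) _.
  by rewrite (stall Kk) ge_min lexx.
by apply: le_trans (margin k i' j Kk); rewrite ge_min lexx orbT.
Qed.

End Stalled.

Lemma run_frequent_reduction (K : nat) : exists k, (K <= k)%N /\ reduction_test k.
Proof.
apply: contrapT => none.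
have stall k : (K <= k)%N -> eps k = eps K.
  elim: k => [|k IH] Kk; first by move: Kk; rewrite leqn0 => /eqP ->.
  have [Kk'|kK] := leqP K k; last by have -> : K = k.+1 by lia.
  rewrite -(IH Kk'); apply: (run_eps_update k).2 => red.
  by apply: none; exists k.
have [k reduced] := stalled_reduction stall.
by apply: none; exists k.
Qed.

End LogDflRun.

(* Only continuity of f and g (from C^1) and 0 < delta, 0 < gamma, 0 < theta < 1,
   0 < eps_0 and a feasible starting point are needed. *)
Theorem proposition4p1 (R : realType) (n m q : nat)
    (f : 'rV[R]_n -> R) (g : 'rV[R]_n -> 'rV[R]_m) (h : 'rV[R]_n -> 'rV[R]_q)
    (l u : 'rV[R]_n) (x0 : 'rV[R]_n)
    (nu eps0 gamma theta pe delta : R) (ta0 : 'I_n -> R)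
    (x : nat -> 'rV[R]_n) (eps : nat -> R) (ta al : nat -> 'I_n -> R)
    (d : nat -> 'I_n -> 'rV[R]_n) (y : nat -> nat -> 'rV[R]_n)
    (ahp ahm : nat -> 'I_n -> R) :
  C1 f -> C1 g -> C1 h ->
  (forall i : 'I_n, l ord0 i < u ord0 i) ->
  inX l u x0 -> inS g x0 ->
  1 < nu -> 0 < eps0 -> 0 < gamma -> 0 < theta < 1 -> 1 < pe -> 0 < delta < 1 ->
  (forall i, 0 < ta0 i) ->
  logdfl_run f g h l u nu eps0 gamma theta pe delta ta0 x0 x eps ta al d y ahp ahm ->
  eps @ \oo --> 0.
Proof.
move=> [f_diff _] [g_diff _] _ _ Xx0 Sx0 _ eps0_gt0 gamma_gt0 /andP[theta_gt0 theta_lt1]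
  _ /andP[delta_gt0 _] _ run.
have f_cont : continuous f by move=> z; exact: differentiable_continuous.
have g_cont : continuous g by move=> z; exact: differentiable_continuous.
apply: (run_eps_cvg0 run theta_gt0 theta_lt1 eps0_gt0) => K.
exact: (run_frequent_reduction run delta_gt0 gamma_gt0 theta_gt0 theta_lt1 eps0_gt0
  (conj Xx0 Sx0) f_cont g_cont).
Qed.
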